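(* Let $J'=(z_w,z_w')$ be a nonempty open interval, let $r:J'\to\mathbb{R}$ be differentiable and non-increasing on $J'$, and let $h:J'\to\mathbb{R}$ be differentiable with $\dot h(z)=1+h(z)^2-2r(z)h(z)$ for all $z\in J'$. Assume $h$ has exactly one zero $z_*$ in $J'$. Let $G(z)=z-\dfrac{2h(z)}{2+h(z)^2-2r(z)h(z)}$ and consider the iteration $z_{n+1}=G(z_n)$, $n=0,1,2,\dots$. (1) If $r(z)>0$ for all $z\in(z_w,z_* )$, then for every initial guess $z_0\in(z_w,z_* )$ all iterates are well defined, the sequence $(z_n)$ is monotonically increasing, lies in $(z_w,z_* )$, and converges to $z_*$. (2) If $r(z)<0$ for all $z\in(z_*,z_w')$, then for every initial guess $z_0\in(z_*,z_w')$ all iterates are well defined, the sequence $(z_n)$ is monotonically decreasing, lies in $(z_*,z_w')$, and converges to $z_*$.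
   Context: $\dot h$ denotes $dh/dz$. Since $h(z_* )=0$ and $\dot h(z_* )=1$, uniqueness of the zero gives $h<0$ on $(z_w,z_* )$ and $h>0$ on $(z_*,z_w')$. (In the intended application $z_w<z_w'$ are consecutive poles of $h$.) *)

From Stdlib Require Import Reals.
Open Scope R_scope.

Definition Gmap (h r : R -> R) (z : R) : R :=
  z - 2 * h z / (2 + h z ^ 2 - 2 * r z * h z).

(* Denominator of G; "G(z) well defined" means this is nonzero. *)
Definition Gden (h r : R -> R) (z : R) : R := 2 + h z ^ 2 - 2 * r z * h z.

Fixpoint iterG (h r : R -> R) (z0 : R) (n : nat) : R :=
  match n with
  | O => z0
  | S m => Gmap h r (iterG h r z0 m)
  end.

(** Left of the zero [zs], where [h < 0] and [r > 0], compare [h] with the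
    Riccati equation whose coefficient is frozen at [r0 := r z].  Since [r] is
    non-increasing, [h' <= f(h)] with [f(y) = 1 + y^2 - 2 r0 y], so [h] needs at
    least [int_a^0 dy / f(y)] to climb from [a := h z] to [0].  The quadratic
    [psi] below has [psi' <= 1/f] on [[a, 0]] and [psi 0 - psi a = G z - z]; the
    function [t - psi (h t)] is therefore increasing, which gives [G z < zs].
    Together with [z < G z] the iterates increase to a limit [l <= zs]; since
    [Gden] decreases along them, [|h z_n| <= C (z_(n+1) - z_n)], so [h l = 0]
    and [l = zs].  The right-hand case is the mirror image under
    [t |-> -t]. *)

From Stdlib Require Import Reals Lra.
From Coquelicot Require Import Coquelicot.
Open Scope R_scope.

Definition riccati_rhs (r0 y : R) : R := 1 + y ^ 2 - 2 * r0 * y.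

(* The trapezoid-rule mean of [riccati_rhs r0] over [[a, 0]];
   [Gden h r z = 2 * trapezoid_mean (h z) (r z)]. *)
Definition trapezoid_mean (a r0 : R) : R := 1 + a ^ 2 / 2 - r0 * a.

Definition psi (a r0 y : R) : R :=
  y / trapezoid_mean a r0
  - (a - 2 * r0) * (y - a / 2) ^ 2 / (2 * trapezoid_mean a r0 ^ 2).

Definition psi' (a r0 y : R) : R :=
  1 / trapezoid_mean a r0
  - (a - 2 * r0) * (y - a / 2) / trapezoid_mean a r0 ^ 2.

Lemma derivable_pt_lim_psi a r0 y : derivable_pt_lim (psi a r0) y (psi' a r0 y).
Proof.
  apply is_derive_Reals; unfold psi, psi'.
  auto_derive; [easy|].
  unfold Rdiv; simpl pow; rewrite !Rinv_mult, Rinv_1.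
  set (iM := / trapezoid_mean a r0); field.
Qed.

Lemma psi_increment a r0 :
  psi a r0 0 - psi a r0 a = - a / trapezoid_mean a r0.
Proof.
  unfold psi; replace ((0 - a / 2) ^ 2) with ((a - a / 2) ^ 2) by field.
  unfold Rdiv; ring.
Qed.

Lemma psi'_mul_lt_1 a r0 y D :
  a < y < 0 -> 0 < r0 -> 0 < D <= riccati_rhs r0 y -> psi' a r0 y * D < 1.
Proof.
  intros Hy Hr HD.
  unfold riccati_rhs in HD; unfold psi'.
  set (M := trapezoid_mean a r0); set (f := 1 + y ^ 2 - 2 * r0 * y) in HD.
  assert (HM : 1 < M).
  { unfold M, trapezoid_mean.
    assert (0 < r0 * - a) by (apply Rmult_lt_0_compat; lra).
    assert (0 <= a ^ 2) by apply pow2_ge_0.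
    lra. }
  set (p := 1 / M - (a - 2 * r0) * (y - a / 2) / M ^ 2).
  destruct (Rle_or_lt p 0) as [Hp | Hp]; [nra|].
  (* [1 - psi' f] is a sum of two nonnegative terms, the second one positive. *)
  assert (Hid : (1 - p * f) * M ^ 2 = (M - f) ^ 2 + y * (a - y) * f)
    by (unfold p, f, M, trapezoid_mean in *; field; lra).
  assert (0 < y * (a - y) * f) by (apply Rmult_lt_0_compat; nra).
  assert (0 <= (M - f) ^ 2) by apply pow2_ge_0.
  assert (0 < 1 - p * f) by nra.
  nra.
Qed.

Lemma derivable_pt_lim_pos_root_left f x l x0 :
  derivable_pt_lim f x l -> 0 < l -> f x = 0 -> x0 < x ->
  exists y, x0 < y < x /\ f y < 0.
Proof.
  intros Hf Hl Hfx Hx0.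
  destruct (Hf (l / 2) ltac:(lra)) as [d Hd].
  pose proof (cond_pos d).
  set (k := - Rmin (d / 2) ((x - x0) / 2)).
  assert (Hk : - (d / 2) <= k /\ - ((x - x0) / 2) <= k /\ k < 0).
  { unfold k; pose proof (Rmin_l (d / 2) ((x - x0) / 2));
      pose proof (Rmin_r (d / 2) ((x - x0) / 2)).
    repeat split; try lra; apply Rmin_case; lra. }
  assert (Hq : Rabs ((f (x + k) - f x) / k - l) < l / 2)
    by (apply Hd; [lra | rewrite Rabs_left; lra]).
  rewrite Hfx, Rminus_0_r in Hq; apply Rabs_def2 in Hq.
  assert (Hfk : f (x + k) = f (x + k) / k * k) by (field; lra).
  exists (x + k); split; [lra | nra].
Qed.

Lemma Un_cv_0_of_increments_bound u v l C :
  Un_cv u l -> (forall n, Rabs (v n) <= C * (u (S n) - u n)) -> Un_cv v 0.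
Proof.
  intros Hu Hv; apply is_lim_seq_Reals, is_lim_seq_abs_0.
  apply is_lim_seq_Reals in Hu.
  assert (Hinc : is_lim_seq (fun n => C * (u (S n) - u n)) (C * (l - l))).
  { apply is_lim_seq_mult'; [apply is_lim_seq_const|].
    apply is_lim_seq_minus'; [exact (proj1 (is_lim_seq_incr_1 u l) Hu) | exact Hu]. }
  rewrite Rminus_diag, Rmult_0_r in Hinc.
  apply (is_lim_seq_le_le (fun _ => 0) _ (fun n => C * (u (S n) - u n)) 0);
    [| apply is_lim_seq_const | exact Hinc].
  intro n; split; [apply Rabs_pos | apply Hv].
Qed.

Section LeftOfRoot.

Variables (zw zs : R) (r h : R -> R).

Hypothesis r_noninc : forall x y, zw < x -> x <= y -> y < zs -> r y <= r x.
Hypothesis r_pos : forall z, zw < z < zs -> 0 < r z.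
Hypothesis h_riccati :
  forall z, zw < z <= zs -> derivable_pt_lim h z (riccati_rhs (r z) (h z)).
Hypothesis h_zs : h zs = 0.
Hypothesis h_nonzero : forall z, zw < z < zs -> h z <> 0.

Lemma h_continuous z : zw < z <= zs -> continuity_pt h z.
Proof.
  intro Hz; apply derivable_continuous_pt.
  exists (riccati_rhs (r z) (h z)); exact (h_riccati z Hz).
Qed.

Lemma h_neg z : zw < z < zs -> h z < 0.
Proof.
  intro Hz.
  destruct (Rtotal_order (h z) 0) as [| [Hz0 | Hpos]];
    [easy | exfalso; exact (h_nonzero z Hz Hz0) | exfalso].
  assert (Hd : derivable_pt_lim h zs 1).
  { pose proof (h_riccati zs ltac:(lra)) as D.
    unfold riccati_rhs in D; rewrite h_zs in D.
    now replace (1 + 0 ^ 2 - 2 * r zs * 0) with 1 in D by ring. }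
  destruct (derivable_pt_lim_pos_root_left h zs 1 z Hd Rlt_0_1 h_zs (proj2 Hz))
    as [y [Hy Hhy]].
  destruct (Ranalysis5.IVT_interv (fun t => - h t) z y) as [w [Hw Hhw]].
  - intros t Ht; apply continuity_pt_opp, h_continuous; lra.
  - lra.
  - lra.
  - lra.
  - apply (h_nonzero w); lra.
Qed.

Lemma riccati_rhs_pos z : zw < z < zs -> 0 < riccati_rhs (r z) (h z).
Proof.
  intro Hz; pose proof (h_neg z Hz); pose proof (r_pos z Hz).
  unfold riccati_rhs; nra.
Qed.

Lemma h_increasing x y : zw < x -> x < y <= zs -> h x < h y.
Proof.
  intros Hx Hxy.
  destruct (MVT_cor2 h (fun t => riccati_rhs (r t) (h t)) x y (proj1 Hxy))
    as [c [Ec Hc]].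
  - intros c Hc; apply h_riccati; lra.
  - pose proof (riccati_rhs_pos c ltac:(lra)); nra.
Qed.

Lemma Gden_gt_2 z : zw < z < zs -> 2 < Gden h r z.
Proof.
  intro Hz; pose proof (h_neg z Hz); pose proof (r_pos z Hz).
  unfold Gden; nra.
Qed.

Lemma Gden_noninc x z : zw < x -> x <= z < zs -> Gden h r z <= Gden h r x.
Proof.
  intros Hx Hxz.
  assert (Hh : h x <= h z < 0).
  { split; [| apply h_neg; lra].
    destruct (Rle_lt_or_eq_dec x z (proj1 Hxz)) as [Hlt | ->]; [|lra].
    apply Rlt_le, h_increasing; lra. }
  assert (Hr : 0 < r z <= r x) by (split; [apply r_pos | apply r_noninc]; lra).
  unfold Gden; nra.
Qed.

Lemma Gmap_trapezoid z :
  zw < z < zs -> Gmap h r z = z - h z / trapezoid_mean (h z) (r z).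
Proof.
  intro Hz; pose proof (Gden_gt_2 z Hz) as HD.
  unfold Gden in HD; unfold Gmap, trapezoid_mean; field; lra.
Qed.

Lemma Gmap_gt z : zw < z < zs -> z < Gmap h r z.
Proof.
  intro Hz; rewrite Gmap_trapezoid by exact Hz.
  pose proof (h_neg z Hz); pose proof (r_pos z Hz).
  assert (0 < trapezoid_mean (h z) (r z)) by (unfold trapezoid_mean; nra).
  assert (h z / trapezoid_mean (h z) (r z) < 0) by (apply Rdiv_neg_pos; lra).
  lra.
Qed.

Lemma Gmap_lt z : zw < z < zs -> Gmap h r z < zs.
Proof.
  intro Hz.
  set (a := h z); set (r0 := r z).
  set (g := fun t => t - psi a r0 (h t)).
  set (g' := fun t => 1 - psi' a r0 (h t) * riccati_rhs (r t) (h t)).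
  destruct (MVT_cor2 g g' z zs (proj2 Hz)) as [c [Ec Hc]].
  { intros c Hc.
    apply (derivable_pt_lim_minus id (comp (psi a r0) h) c 1).
    - apply derivable_pt_lim_id.
    - apply derivable_pt_lim_comp; [apply h_riccati; lra | apply derivable_pt_lim_psi]. }
  assert (Hg' : 0 < g' c).
  { assert (a < h c < 0) by (split; [apply h_increasing | apply h_neg]; lra).
    assert (r c <= r0) by (apply r_noninc; lra).
    pose proof (riccati_rhs_pos c ltac:(lra)).
    assert (riccati_rhs (r c) (h c) <= riccati_rhs r0 (h c))
      by (unfold riccati_rhs; nra).
    enough (psi' a r0 (h c) * riccati_rhs (r c) (h c) < 1) by (unfold g'; lra).
    apply psi'_mul_lt_1; try lra; apply r_pos; lra. }
  assert (Hgz : g zs - g z = zs - Gmap h r z).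
  { unfold g; rewrite h_zs, Gmap_trapezoid by exact Hz; fold a r0.
    pose proof (psi_increment a r0); lra. }
  nra.
Qed.

Section Iteration.

Variable z0 : R.
Hypothesis z0_between : zw < z0 < zs.

Notation u := (iterG h r z0).

Lemma iterG_between n : z0 <= u n < zs.
Proof.
  induction n as [| n IH]; [simpl; lra|].
  change (u (S n)) with (Gmap h r (u n)).
  pose proof (Gmap_gt (u n) ltac:(lra)); pose proof (Gmap_lt (u n) ltac:(lra)); lra.
Qed.

Lemma Rabs_h_iterG_le n : Rabs (h (u n)) <= Gden h r z0 / 2 * (u (S n) - u n).
Proof.
  pose proof (iterG_between n) as Hn.
  assert (Hz : zw < u n < zs) by lra.
  pose proof (Gden_gt_2 (u n) Hz); pose proof (Gden_noninc z0 (u n) ltac:(lra) Hn).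
  pose proof (h_neg (u n) Hz).
  assert (Hstep : - h (u n) = Gden h r (u n) / 2 * (u (S n) - u n)).
  { change (u (S n)) with (Gmap h r (u n)); unfold Gmap.
    fold (Gden h r (u n)); field; lra. }
  assert (0 <= u (S n) - u n)
    by (change (u (S n)) with (Gmap h r (u n)); pose proof (Gmap_gt (u n) Hz); lra).
  rewrite Rabs_left, Hstep by lra.
  apply Rmult_le_compat_r; lra.
Qed.

Lemma iterG_cv : Un_cv u zs.
Proof.
  assert (Hgrow : Un_growing u).
  { intro n; change (u (S n)) with (Gmap h r (u n)).
    pose proof (iterG_between n); apply Rlt_le, Gmap_gt; lra. }
  destruct (growing_cv u Hgrow) as [l Hl].
  { exists zs; intros x [n ->]; pose proof (iterG_between n); lra. }
  assert (Hz0l : z0 <= l) by exact (growing_ineq u l Hgrow Hl 0).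
  assert (Hlzs : l <= zs).
  { apply is_lim_seq_Reals in Hl.
    apply (is_lim_seq_le u (fun _ => zs) l zs); [| exact Hl | apply is_lim_seq_const].
    intro n; pose proof (iterG_between n); lra. }
  assert (Hhl : h l = 0).
  { apply (UL_sequence (fun n => h (u n))).
    - apply continuity_seq; [apply h_continuous; lra | exact Hl].
    - exact (Un_cv_0_of_increments_bound u _ l _ Hl Rabs_h_iterG_le). }
  destruct (Rle_lt_or_eq_dec l zs Hlzs) as [Hlt | <-]; [|exact Hl].
  now destruct (h_nonzero l ltac:(lra)).
Qed.

Lemma iterG_increasing_cv :
  (forall n, Gden h r (u n) <> 0 /\ zw < u n < zs /\ u n < u (S n)) /\
  Un_cv u zs.
Proof.
  split; [| exact iterG_cv].
  intro n; pose proof (iterG_between n) as Hn; assert (Hz : zw < u n < zs) by lra.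
  change (u (S n)) with (Gmap h r (u n)).
  pose proof (Gden_gt_2 (u n) Hz); pose proof (Gmap_gt (u n) Hz).
  repeat split; lra.
Qed.

End Iteration.

End LeftOfRoot.

Definition reflect (f : R -> R) (t : R) : R := - f (- t).

Lemma Gden_reflect h r x : Gden (reflect h) (reflect r) (- x) = Gden h r x.
Proof. unfold Gden, reflect; rewrite Ropp_involutive; ring. Qed.

Lemma Gmap_reflect h r x : Gmap (reflect h) (reflect r) (- x) = - Gmap h r x.
Proof.
  unfold Gmap; fold (Gden (reflect h) (reflect r) (- x)) (Gden h r x).
  rewrite Gden_reflect; unfold reflect; rewrite Ropp_involutive; unfold Rdiv; ring.
Qed.

Lemma iterG_reflect h r z0 n :
  iterG (reflect h) (reflect r) (- z0) n = - iterG h r z0 n.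
Proof. induction n as [| n IH]; [reflexivity | simpl; rewrite IH; apply Gmap_reflect]. Qed.

Lemma derivable_pt_lim_reflect f x l :
  derivable_pt_lim f (- x) l -> derivable_pt_lim (reflect f) x l.
Proof.
  intro Hf.
  pose proof (derivable_pt_lim_comp _ f x _ _
                (derivable_pt_lim_opp _ _ _ (derivable_pt_lim_id x)) Hf) as Hc.
  replace l with (- (l * - (1))) by ring.
  exact (derivable_pt_lim_opp _ _ _ Hc).
Qed.

Lemma iterG_decreasing_cv zs zw' r h z0 :
  (forall x y, zs < x -> x <= y -> y < zw' -> r y <= r x) ->
  (forall z, zs < z < zw' -> r z < 0) ->
  (forall z, zs <= z < zw' -> derivable_pt_lim h z (riccati_rhs (r z) (h z))) ->
  h zs = 0 -> (forall z, zs < z < zw' -> h z <> 0) -> zs < z0 < zw' ->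
  (forall n, Gden h r (iterG h r z0 n) <> 0 /\ zs < iterG h r z0 n < zw' /\
             iterG h r z0 (S n) < iterG h r z0 n) /\
  Un_cv (iterG h r z0) zs.
Proof.
  intros r_noninc r_neg h_riccati h_zs h_nonzero Hz0.
  destruct (iterG_increasing_cv (- zw') (- zs) (reflect r) (reflect h)) with (- z0)
    as [Hiter Hcv].
  - intros x y Hx Hxy Hy; unfold reflect; enough (r (- x) <= r (- y)) by lra.
    apply r_noninc; lra.
  - intros z Hz; unfold reflect; enough (r (- z) < 0) by lra; apply r_neg; lra.
  - intros z Hz; apply derivable_pt_lim_reflect.
    replace (riccati_rhs (reflect r z) (reflect h z))
      with (riccati_rhs (r (- z)) (h (- z))) by (unfold riccati_rhs, reflect; ring).
    apply h_riccati; lra.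
  - unfold reflect; rewrite Ropp_involutive, h_zs; ring.
  - intros z Hz; unfold reflect; enough (h (- z) <> 0) by lra; apply h_nonzero; lra.
  - lra.
  - split.
    + intro n; destruct (Hiter n) as (Hden & Hbetween & Hdecr).
      rewrite !iterG_reflect in *; rewrite Gden_reflect in Hden.
      repeat split; lra.
    + apply is_lim_seq_Reals in Hcv; apply is_lim_seq_Reals.
      apply (is_lim_seq_ext _ _ _ (iterG_reflect h r z0)), is_lim_seq_opp in Hcv.
      simpl in Hcv; rewrite Ropp_involutive in Hcv.
      apply (is_lim_seq_ext _ _ _ (fun n => Ropp_involutive _)), Hcv.
Qed.

Theorem theorem3p2 (zw zw' : R) (r h : R -> R) (zstar : R) :
  zw < zw' ->
  (forall z, zw < z < zw' -> exists l, derivable_pt_lim r z l) ->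
  (forall x y, zw < x -> x <= y -> y < zw' -> r y <= r x) ->
  (forall z, zw < z < zw' ->
     derivable_pt_lim h z (1 + h z ^ 2 - 2 * r z * h z)) ->
  zw < zstar < zw' -> h zstar = 0 ->
  (forall z, zw < z < zw' -> h z = 0 -> z = zstar) ->
  ((forall z, zw < z < zstar -> 0 < r z) ->
   forall z0, zw < z0 < zstar ->
     (forall n, Gden h r (iterG h r z0 n) <> 0 /\
                zw < iterG h r z0 n < zstar /\
                iterG h r z0 n < iterG h r z0 (S n)) /\
     Un_cv (iterG h r z0) zstar) /\
  ((forall z, zstar < z < zw' -> r z < 0) ->
   forall z0, zstar < z0 < zw' ->
     (forall n, Gden h r (iterG h r z0 n) <> 0 /\
                zstar < iterG h r z0 n < zw' /\
                iterG h r z0 (S n) < iterG h r z0 n) /\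
     Un_cv (iterG h r z0) zstar).
Proof.
  intros _ _ r_noninc h_riccati zstar_between h_zstar h_unique.
  assert (h_nonzero : forall z, zw < z < zw' -> z <> zstar -> h z <> 0)
    by (intros z Hz Hne Hhz; exact (Hne (h_unique z Hz Hhz))).
  split.
  - intros r_pos z0 Hz0; apply (iterG_increasing_cv zw zstar); try easy.
    + intros x y Hx Hxy Hy; apply r_noninc; lra.
    + intros z Hz; apply h_riccati; lra.
    + intros z Hz; apply h_nonzero; lra.
  - intros r_neg z0 Hz0; apply (iterG_decreasing_cv zstar zw'); try easy.
    + intros x y Hx Hxy Hy; apply r_noninc; lra.
    + intros z Hz; apply h_riccati; lra.
    + intros z Hz; apply h_nonzero; lra.
Qed.
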